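(* Let $F$ be a commutative field, $1\le h\le n-1$, and let $K$ be a linear complex of $h$-subspaces in $\mathrm{PG}(n,F)$. Then the set of all singular $(h-1)$-subspaces of $K$ equals $(\mathcal G_{n,h-1}\cap W)^{\wp_{n,h-1}^{-1}}$ for some subspace $W$ of $\mathrm{PG}\big(\binom{n+1}{h}-1,F\big)$ with $\binom{n+1}{h}-(n+2)\le\dim W\le\binom{n+1}{h}-(h+2)$.
   Context: A $d$-subspace is a projective subspace of dimension $d$. For $0\le k\le n-1$, $\wp_{n,k}$ denotes the Plücker embedding sending the $k$-subspace spanned by independent $v_0,\dots,v_k\in F^{n+1}$ to $F(v_0\wedge\cdots\wedge v_k)$ in $\mathrm{PG}\big(\binom{n+1}{k+1}-1,F\big)=\mathbb P(\bigwedge^{k+1}F^{n+1})$; its image is the Grassmann variety $\mathcal G_{n,k}$. A linear complex of $h$-subspaces is the set of $h$-subspaces whose image under $\wp_{n,h}$ lies in a fixed hyperplane of $\mathrm{PG}\big(\binom{n+1}{h+1}-1,F\big)$. An $(h-1)$-subspace $U$ is singular for $K$ if every $h$-subspace containing $U$ belongs to $K$. *)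

From HB Require Import structures.
From mathcomp Require Import all_boot all_order all_algebra.
Set Implicit Arguments. Unset Strict Implicit. Unset Printing Implicit Defensive.
Import GRing.Theory.
Local Open Scope ring_scope.

(* Projective space PG(n,F) = P(F^(n+1)); vectors of F^(n+1) are 'rV[F]_(n.+1).
   A projective d-subspace is a vector subspace U : {vspace 'rV[F]_(n.+1)}
   with \dim U = d+1. *)

Section Plucker.
Variable F : fieldType.
Variable n : nat.

(* The m-element subsets of the coordinate set {0..n}, in a fixed enumeration;
   this list has length 'C(n+1, m) and indexes the standard basis
   e_{i_1} /\ ... /\ e_{i_m} of the m-th exterior power of F^(n+1). *)
Definition msubsets (m : nat) : seq {set 'I_(n.+1)} :=
  enum [set S : {set 'I_(n.+1)} | #|S| == m].

Definition pl_minor (U : {vspace 'rV[F]_(n.+1)}) (S : {set 'I_(n.+1)}) : F :=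
  \det (\matrix_(i < \dim U, j < \dim U)
          (tnth (vbasis U) i) 0 (nth ord0 (enum S) j)).

(* The Plucker vector of U (with \dim U = m) in F^('C(n+1,m)) = /\^m F^(n+1);
   wp_{n,m-1}(U) is the projective point spanned by this vector. *)
Definition plucker (m : nat) (U : {vspace 'rV[F]_(n.+1)}) : 'rV[F]_('C(n.+1, m)) :=
  \row_(j < 'C(n.+1, m)) pl_minor U (nth set0 (msubsets m) j).

(* The linear complex of h-subspaces associated with a hyperplane H of
   PG('C(n+1,h+1)-1, F): the h-subspaces whose Plucker image lies in H. *)
Definition in_linear_complex (h : nat) (H : {vspace 'rV[F]_('C(n.+1, h.+1))})
    (U : {vspace 'rV[F]_(n.+1)}) : Prop :=
  \dim U = h.+1 /\ plucker h.+1 U \in H.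

Definition is_hyperplane (N : nat) (H : {vspace 'rV[F]_N}) : Prop :=
  \dim H = N.-1.

Definition singular_for (h : nat) (H : {vspace 'rV[F]_('C(n.+1, h.+1))})
    (V : {vspace 'rV[F]_(n.+1)}) : Prop :=
  \dim V = h /\
  forall U : {vspace 'rV[F]_(n.+1)}, \dim U = h.+1 -> (V <= U)%VS ->
    in_linear_complex H U.

End Plucker.

(* Write H = ker c for a linear form c on /\^(h+1) F^(n+1), and consider the bilinear
   form B(p, u) = c(u /\ p) on /\^h F^(n+1) x F^(n+1).  An (h-1)-subspace V is singular
   iff B(wp(V), -) = 0: for u in V the product u /\ wp(V) vanishes, and for u outside V
   it is a nonzero multiple of wp(V + <u>), and every h-subspace through V is of this
   form.  So W is the kernel of the linear map p |-> B(p, -) into the dual of F^(n+1),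
   which has rank at most n+1; the rank is at least h+1 because, for an (h+1)-set T of
   coordinates with c(e_T) <> 0, the h+1 vectors e_(T - t), t in T, have independent
   images. *)

From HB Require Import structures.
From mathcomp Require Import all_boot all_order all_algebra.
From mathcomp Require Import ring.
Set Implicit Arguments. Unset Strict Implicit. Unset Printing Implicit Defensive.
Import GRing.Theory.
Local Open Scope ring_scope.

Local Notation elt S k := (nth ord0 (enum S) k).

Section Minors.
Variables (F : fieldType) (n : nat).
Local Notation vT := 'rV[F]_n.+1.

Definition col_submx m p (Y : m.-tuple vT) (S : {set 'I_n.+1}) : 'M[F]_(m, p) :=
  \matrix_(i, j) tnth Y i 0 (elt S j).

Definition minor m (Y : m.-tuple vT) S := \det (col_submx m Y S).

Lemma pl_minorE (U : {vspace vT}) S : pl_minor U S = minor (vbasis U) S.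
Proof. by []. Qed.

Lemma minor_tcast m m' (e : m = m') (Y : m.-tuple vT) S :
  minor (tcast e Y) S = minor Y S.
Proof. by case: m' / e; rewrite tcast_id. Qed.

Lemma basis_tcast_vbasis m (U : {vspace vT}) (e : \dim U = m) :
  basis_of U (tcast e (vbasis U)).
Proof. by rewrite val_tcast; exact: vbasisP. Qed.

Definition coord_mx m k (Y : m.-tuple vT) (Z : k.-tuple vT) : 'M[F]_(m, k) :=
  \matrix_(i, j) coord Z j (tnth Y i).

Lemma col_submx_span m k p (Y : m.-tuple vT) (Z : k.-tuple vT) S :
  {subset Y <= <<Z>>%VS} -> col_submx p Y S = coord_mx Y Z *m col_submx p Z S.
Proof.
move=> sYZ; apply/matrixP => i j; rewrite !mxE.
rewrite {1}(coord_span (sYZ _ (mem_tnth i Y))) summxE.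
by apply: eq_bigr => j' _; rewrite !mxE (tnth_nth 0 Z).
Qed.

Lemma minor_span_lt m k (Y : m.-tuple vT) (Z : k.-tuple vT) S :
  (k < m)%N -> {subset Y <= <<Z>>%VS} -> minor Y S = 0.
Proof.
move=> ltkm sYZ; apply: contraTeq ltkm => nz.
rewrite -leqNgt -(mxrank_unit (A := col_submx m Y S)); last by rewrite unitmxE unitfE.
rewrite (col_submx_span _ S sYZ).
exact: leq_trans (mxrankM_maxr _ _) (rank_leq_row _).
Qed.

Lemma minor_basis m (Y Z : m.-tuple vT) :
  <<Y>>%VS = <<Z>>%VS -> free Z ->
  exists2 a : F, a != 0 & forall S, minor Y S = a * minor Z S.
Proof.
move=> eYZ freeZ.
have sYZ : {subset Y <= <<Z>>%VS} by move=> y /memv_span; rewrite eYZ.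
have sZY : {subset Z <= <<Y>>%VS} by move=> z /memv_span; rewrite eYZ.
exists (\det (coord_mx Y Z)); last first.
  by move=> S; rewrite /minor (col_submx_span _ S sYZ) det_mulmx.
have inv_coord : coord_mx Z Y *m coord_mx Y Z = 1%:M.
  apply/matrixP => i i'; rewrite !mxE -(coord_free i i' freeZ) -tnth_nth.
  rewrite [in RHS](coord_span (sZY _ (mem_tnth i Z))) linear_sum.
  by apply: eq_bigr => j _; rewrite linearZ !mxE (tnth_nth 0 Y).
apply: contra_eqN (congr1 determinant inv_coord) => /eqP d0.
by rewrite det_mulmx d0 mulr0 det1 eq_sym oner_eq0.
Qed.

Lemma elt_setD1 (S : {set 'I_n.+1}) (k j : nat) : (k < #|S|)%N ->
  elt (S :\ elt S k) j = elt S (bump k j).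
Proof.
move=> kS; have enumD1 : enum (S :\ elt S k) = rem (elt S k) (enum S).
  rewrite rem_filter ?enum_uniq // /enum_mem -filter_predI.
  by apply: eq_filter => y /=; rewrite !inE.
rewrite enumD1 remE index_uniq ?enum_uniq -?cardE //.
have sk : size (take k (enum S)) = k by rewrite size_take -cardE kS.
rewrite nth_cat sk /bump; case: ltnP => [jk | kj].
  by rewrite nth_take // leqNgt jk addn0.
by rewrite nth_drop add1n addSn subnKC.
Qed.

Lemma minor_cons m (X : m.-tuple vT) u (S : {set 'I_n.+1}) : #|S| = m.+1 ->
  minor [tuple of u :: X] S =
  \sum_(k < m.+1) (-1) ^+ k * u 0 (elt S k) * minor X (S :\ elt S k).
Proof.
move=> cardS; rewrite /minor (expand_det_row _ ord0); apply: eq_bigr => k _.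
rewrite /cofactor !mxE add0n mulrCA mulrA; congr (_ * _ * \det _).
apply/matrixP => i j; rewrite !mxE !(tnth_nth 0) /=.
by rewrite elt_setD1 // cardS ltn_ord.
Qed.

End Minors.

Section EnumSet.
Variables (n m : nat) (S : {set 'I_n.+1}).
Hypothesis cardS : #|S| = m.+1.

Lemma mem_elt (k : 'I_m.+1) : elt S k \in S.
Proof. by rewrite -mem_enum mem_nth // -cardE cardS. Qed.

Lemma elt_eq (k k' : 'I_m.+1) : (elt S k == elt S k') = (k == k').
Proof. by rewrite nth_uniq ?enum_uniq // -cardE cardS. Qed.

Lemma card_setD1_elt (k : 'I_m.+1) : #|S :\ elt S k| = m.
Proof. by have := cardsD1 (elt S k) S; rewrite cardS mem_elt => -[]. Qed.

End EnumSet.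

Section Subsets.
Variables n m : nat.

Definition msubset (l : 'I_('C(n.+1, m))) : {set 'I_n.+1} := nth set0 (msubsets n m) l.

Lemma size_msubsets : size (msubsets n m) = 'C(n.+1, m).
Proof. by rewrite -cardE card_draws card_ord. Qed.

Lemma mem_msubsets (S : {set 'I_n.+1}) : (S \in msubsets n m) = (#|S| == m).
Proof. by rewrite mem_enum inE. Qed.

Lemma card_msubset l : #|msubset l| = m.
Proof. by apply/eqP; rewrite -mem_msubsets mem_nth // size_msubsets. Qed.

Lemma msubset_inj : injective msubset.
Proof.
move=> l l' /eqP; rewrite nth_uniq ?size_msubsets ?enum_uniq //.
by move/eqP/val_inj.
Qed.

Lemma msubset_onto (S : {set 'I_n.+1}) : #|S| = m -> {l | msubset l = S}.
Proof.
move=> cardS; have Sin : S \in msubsets n m by rewrite mem_msubsets cardS.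
have lt : (index S (msubsets n m) < 'C(n.+1, m))%N by rewrite -size_msubsets index_mem.
by exists (Ordinal lt); rewrite /msubset nth_index.
Qed.

Lemma sum_msubset_eq (R : pzSemiRingType) (f : {set 'I_n.+1} -> R)
    (S : {set 'I_n.+1}) : #|S| = m ->
  \sum_l (msubset l == S)%:R * f (msubset l) = f S.
Proof.
case/msubset_onto=> l0 <-; rewrite (bigD1 l0) //= eqxx mul1r big1 ?addr0 //.
by move=> l /negPf nl; rewrite (inj_eq msubset_inj) nl mul0r.
Qed.

End Subsets.

Lemma setD1_eq (T : finType) (S S' : {set T}) a b :
  a \in S -> a \in S' -> S :\ a = S' :\ b -> a = b /\ S = S'.
Proof.
move=> aS aS' eSS'; have ab : a = b.
  apply/eqP; apply: contraT => nab.
  have : a \in S' :\ b by rewrite !inE nab aS'.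
  by rewrite -eSS' setD11.
by split=> //; rewrite -(setD1K aS) -(setD1K aS') eSS' ab.
Qed.

Section Wedge.
Variables (F : fieldType) (n h : nat).
Local Notation vT := 'rV[F]_n.+1.

(* The matrix of p |-> u /\ p from /\^h to /\^(h+1) in the bases indexed by
   [msubset]; its signs are those of the expansion of a minor along its first row. *)
Definition wedge_mx (u : vT) : 'M[F]_('C(n.+1, h), 'C(n.+1, h.+1)) :=
  \matrix_(K, l) \sum_(k < h.+1) (-1) ^+ k * u 0 (elt (msubset l) k)
      * (msubset K == msubset l :\ elt (msubset l) k)%:R.

Fact wedge_mx_is_linear : linear wedge_mx.
Proof.
move=> a u v; apply/matrixP => K l; rewrite !mxE mulr_sumr -big_split.
by apply: eq_bigr => k _; rewrite /= !mxE; ring.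
Qed.

HB.instance Definition _ :=
  GRing.isLinear.Build F vT 'M[F]_('C(n.+1, h), 'C(n.+1, h.+1)) *:%R wedge_mx
    wedge_mx_is_linear.

Lemma plucker_mul_wedge (V : {vspace vT}) (eV : \dim V = h) u l :
  (plucker h V *m wedge_mx u) 0 l =
  minor [tuple of u :: tcast eV (vbasis V)] (msubset l).
Proof.
rewrite minor_cons ?card_msubset // mxE.
under eq_bigr do rewrite !mxE mulr_sumr.
rewrite exchange_big; apply: eq_bigr => k _ /=.
have cardD1 := card_setD1_elt (card_msubset l) k.
rewrite (minor_tcast eV) -pl_minorE -(sum_msubset_eq (pl_minor V) cardD1) mulr_sumr.
by apply: eq_bigr => K _; rewrite mulrC mulrA.
Qed.

Lemma plucker_wedge_eq0 (V : {vspace vT}) u : \dim V = h -> u \in V ->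
  plucker h V *m wedge_mx u = 0.
Proof.
move=> eV uV; apply/rowP => l; rewrite (plucker_mul_wedge eV) mxE.
have spanX := span_basis (basis_tcast_vbasis eV).
apply: (minor_span_lt (Z := tcast eV (vbasis V))) => // x.
by rewrite inE spanX => /predU1P[-> // | /memv_span]; rewrite spanX.
Qed.

Lemma plucker_wedge_line (V U : {vspace vT}) u :
  \dim V = h -> \dim U = h.+1 -> (V <= U)%VS -> u \in U -> u \notin V ->
  exists2 a : F, a != 0 & plucker h V *m wedge_mx u = a *: plucker h.+1 U.
Proof.
move=> eV eU sVU uU uV; have basisX := basis_tcast_vbasis eV.
set X := tcast eV (vbasis V) in basisX *; set Y := [tuple of u :: X].
have spanX := span_basis basisX.
have freeY : free Y by rewrite free_cons spanX uV (basis_free basisX).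
have basisZ := basis_tcast_vbasis eU.
have spanY : <<Y>>%VS = <<tcast eU (vbasis U)>>%VS.
  rewrite (span_basis basisZ); apply/eqP.
  rewrite eqEdim (eqP freeY) eU size_tuple ltnSn andbT.
  apply/span_subvP => x; rewrite inE => /predU1P[-> // | /memv_span].
  by rewrite spanX => /(subvP sVU).
have [a a0 minorY] := minor_basis spanY (basis_free basisZ).
exists a => //; apply/rowP => l.
by rewrite (plucker_mul_wedge eV) minorY !mxE pl_minorE (minor_tcast eU).
Qed.

Lemma wedge_mx_delta l0 (k k' : 'I_h.+1) K l :
  msubset K = msubset l0 :\ elt (msubset l0) k ->
  wedge_mx (delta_mx 0 (elt (msubset l0) k')) K l =
  ((l == l0) && (k == k'))%:R * (-1) ^+ k.
Proof.
move=> eK; set T := msubset l0; set S := msubset l.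
have cardT : #|T| = h.+1 := card_msubset l0.
have cardS : #|S| = h.+1 := card_msubset l.
have nonzero_term (k'' : 'I_h.+1) :
    (elt S k'' == elt T k') && (T :\ elt T k == S :\ elt S k'')
    = [&& l == l0, k == k' & k'' == k].
  apply/andP/and3P => [[/eqP/esym e1 /eqP e2] | [/eqP el /eqP <- /eqP ->]]; last first.
    by rewrite /S el !eqxx.
  have eltT : elt S k'' \in T by rewrite -e1 mem_elt.
  have [eSk eST] := setD1_eq (mem_elt cardS k'') eltT (esym e2).
  rewrite -(elt_eq cardT) e1 eSk eqxx -(elt_eq cardS) eSk eST eqxx.
  by split=> //; apply/eqP/msubset_inj.
rewrite /wedge_mx mxE (bigD1 k) //= big1 => [|k'' nk''].
  by rewrite !mxE eqxx eK -/T -/S -mulrA -natrM mulnb nonzero_term eqxx andbT addr0 mulrC.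
by rewrite !mxE eqxx eK -/T -/S -mulrA -natrM mulnb nonzero_term (negPf nk'') !andbF mulr0.
Qed.

End Wedge.

Lemma hyperplane_kernel (F : fieldType) N (H : {vspace 'rV[F]_N}) :
  (0 < N)%N -> \dim H = N.-1 ->
  exists2 c : 'cV[F]_N, c != 0 & forall x, (x \in H) = (x *m c == 0).
Proof.
move=> N_gt0 dimH; have [v _ vH] : exists2 v, v \in fullv & v \notin H.
  apply/subvPn; apply: contraTN N_gt0 => /dimvS.
  by rewrite dimvf dim_matrix mul1r dimH; case: (N) => // N'; rewrite /= ltnn.
have basisH := vbasisP H; set X := [tuple of v :: vbasis H].
have freeX : free X by rewrite free_cons (span_basis basisH) vH (basis_free basisH).
(* [c] represents the first coordinate in the basis [v :: vbasis H]. *)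
pose phi := coord X 0; pose c : 'cV[F]_N := \col_i (phi (delta_mx 0 i) : F).
have mulc x : (x *m c == 0) = (phi x == 0).
  rewrite [x *m c]mx11_scalar -scalemx1 scaler_eq0 oner_eq0 orbF mxE /c /phi.
  rewrite [in RHS](row_sum_delta x) linear_sum.
  under [in RHS]eq_bigr do rewrite linearZ /=.
  by congr (_ == 0); apply: eq_bigr => i _; rewrite mxE.
exists c => [|x]; rewrite ?mulc.
  apply/eqP => c0; have := mulc v.
  by rewrite c0 mulmx0 eqxx /phi (coord_free 0 0 freeX) oner_eq0.
apply/idP/idP => [xH | /eqP phi0].
  rewrite /phi (coord_vbasis xH) linear_sum big1 // => i _.
  rewrite linearZ /= -[_`_i]/(X`_(lift 0 i)) coord_free //.
  by rewrite eq_sym (negPf (neq_lift 0 i)) mulr0.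
have spanX : <<X>>%VS = fullv.
  apply/eqP; rewrite eqEdim subvf (eqP freeX) dimvf dim_matrix mul1r /=.
  by rewrite size_tuple dimH prednK.
rewrite (coord_span (_ : x \in <<X>>%VS)) ?spanX ?memvf // big_ord_recl.
rewrite -/(phi x) phi0 scale0r add0r; apply: rpred_sum => i _.
by rewrite rpredZ // vbasis_mem // -[X`_(lift 0 i)]/((vbasis H)`_i) mem_nth ?size_tuple.
Qed.

Section WedgeForm.
Variables (F : fieldType) (n h : nat) (c : 'cV[F]_('C(n.+1, h.+1))).
Local Notation vT := 'rV[F]_n.+1.

Definition wedge_form : 'M[F]_('C(n.+1, h), n.+1) :=
  \matrix_(K, j) (wedge_mx h (delta_mx 0 j) *m c) K 0.

Lemma wedge_formE (u : vT) : wedge_mx h u *m c = wedge_form *m u^T.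
Proof.
rewrite {1}(row_sum_delta u) linear_sum mulmx_suml; apply/colP => K.
rewrite summxE [in RHS]mxE; apply: eq_bigr => j _.
by rewrite linearZ /= -scalemxAl !mxE mulrC.
Qed.

Lemma mul_wedge_form_eq0 (p : 'rV[F]_('C(n.+1, h))) :
  p *m wedge_form = 0 <-> forall u : vT, p *m wedge_mx h u *m c = 0.
Proof.
split=> [pG0 u | wedge0]; first by rewrite -mulmxA wedge_formE mulmxA pG0 mul0mx.
apply/rowP => j; have := wedge0 (delta_mx 0 j).
by rewrite -mulmxA wedge_formE mulmxA trmx_delta -colE => /colP/(_ 0); rewrite !mxE.
Qed.

Definition wedge_map : 'Hom('rV[F]_('C(n.+1, h)), vT) :=
  linfun (@mulmxr F 1 _ _ wedge_form).

Lemma wedge_mapE p : wedge_map p = p *m wedge_form.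
Proof. exact: lfunE. Qed.

(* If c_T <> 0, the row of [wedge_form] indexed by T :\ t_k has entry +-c_T in
   column t_k' when k = k', and 0 otherwise. *)
Lemma rank_wedge_map : c != 0 -> (h.+1 <= \dim (limg wedge_map))%N.
Proof.
move=> c_neq0; have [l0 cl0] : exists l0, c l0 0 != 0.
  apply/existsP; apply: contraNT c_neq0; rewrite negb_exists => /forallP c0.
  by apply/eqP/colP => l; rewrite mxE; apply/eqP/negbNE.
set T := msubset l0.
have cardT : #|T| = h.+1 := card_msubset l0.
have cardD1 := card_setD1_elt cardT.
pose K k := sval (msubset_onto (cardD1 k)).
have eK k : msubset (K k) = T :\ elt T k := svalP (msubset_onto (cardD1 k)).
pose Y := [tuple delta_mx (0 : 'I_1) (K k) *m wedge_form | k < h.+1].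
have Y_elt (k k' : 'I_h.+1) : Y`_k 0 (elt T k') = (k == k')%:R * ((-1) ^+ k * c l0 0).
  rewrite -tnth_nth tnth_mktuple -rowE !mxE (bigD1 l0) //= big1 => [|l nl].
    by rewrite (wedge_mx_delta _ _ _ (eK k)) !eqxx mulrA addr0.
  by rewrite (wedge_mx_delta _ _ _ (eK k)) (negPf nl) !mul0r.
have freeY : free Y.
  apply/freeP => a sum0 k; have := congr1 (fun y : 'rV_n.+1 => y 0 (elt T k)) sum0.
  rewrite /= summxE (bigD1 k) //= big1 => [|k' nk']; last first.
    by rewrite mxE Y_elt (negPf nk') mul0r mulr0.
  rewrite mxE Y_elt eqxx mul1r addr0 mxE => /eqP.
  by rewrite !mulf_eq0 signr_eq0 (negPf cl0) !orbF => /eqP.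
have /dimvS : (<<Y>> <= limg wedge_map)%VS.
  by apply/span_subvP => y /mapP [k _ ->]; rewrite -wedge_mapE memv_img ?memvf.
by rewrite (eqP freeY) size_tuple.
Qed.

Variable H : {vspace 'rV[F]_('C(n.+1, h.+1))}.
Hypothesis H_ker : forall x, (x \in H) = (x *m c == 0).

Lemma singular_forE (V : {vspace vT}) : \dim V = h ->
  singular_for H V <-> plucker h V *m wedge_form = 0.
Proof.
move=> dimV; rewrite mul_wedge_form_eq0; split=> [[_ sing] u | wedge0].
  have [uV | uV] := boolP (u \in V).
    by rewrite plucker_wedge_eq0 // mul0mx.
  have basisV := vbasisP V; set U := <<u :: vbasis V>>%VS.
  have freeU : free (u :: vbasis V).
    by rewrite free_cons (span_basis basisV) uV (basis_free basisV).
  have dimU : \dim U = h.+1 by rewrite (eqP freeU) /= size_tuple dimV.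
  have sVU : (V <= U)%VS.
    by rewrite -(span_basis basisV) sub_span // => y yV; rewrite in_cons yV orbT.
  have [a _ ->] := plucker_wedge_line dimV dimU sVU (memv_span (mem_head _ _)) uV.
  have [_] := sing U dimU sVU; rewrite H_ker -scalemxAl => /eqP ->; exact: scaler0.
split=> // U dimU sVU; split=> //.
have [u uU uV] : exists2 u, u \in U & u \notin V.
  by apply/subvPn/negP => /dimvS; rewrite dimU dimV ltnn.
have [a a0 eq_plucker] := plucker_wedge_line dimV dimU sVU uU uV.
have := wedge0 u; rewrite eq_plucker -scalemxAl => /eqP.
by rewrite scaler_eq0 (negPf a0) -H_ker.
Qed.

End WedgeForm.

Unset Implicit Arguments.
Set Strict Implicit.

Theorem corollary5p4 (F : fieldType) (n h : nat)
  (h_ge1 : (1 <= h)%N) (h_le : (h <= n.-1)%N)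
  (H : {vspace 'rV[F]_('C(n.+1, h.+1))})
  (hypH : is_hyperplane H) :
  exists W : {vspace 'rV[F]_('C(n.+1, h))},
    ('C(n.+1, h) <= \dim W + (n + 1))%N /\
    (\dim W + (h + 1) <= 'C(n.+1, h))%N /\
    (forall V : {vspace 'rV[F]_(n.+1)}, \dim V = h ->
       (singular_for H V <-> plucker h V \in W)).
Proof.
have binom_gt0 : (0 < 'C(n.+1, h.+1))%N.
  by rewrite bin_gt0 ltnS (leq_trans h_le (leq_pred n)).
have [c c_neq0 H_ker] := hyperplane_kernel binom_gt0 hypH.
set f := wedge_map c.
have rank_nullity : (\dim (lker f) + \dim (limg f) = 'C(n.+1, h))%N.
  by have := limg_ker_dim f fullv; rewrite capfv dimvf dim_matrix mul1r.
have rank_le : (\dim (limg f) <= n.+1)%N.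
  by have := dimvS (subvf (limg f)); rewrite dimvf dim_matrix mul1r.
exists (lker f); split; first by rewrite -[X in (X <= _)%N]rank_nullity leq_add2l addn1.
split; first by rewrite -[X in (_ <= X)%N]rank_nullity leq_add2l addn1 rank_wedge_map.
move=> V dimV; rewrite (singular_forE H_ker dimV) memv_ker wedge_mapE.
by split=> /eqP.
Qed.
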